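(* Let $T$, $E$ (a $\mu$-spanning $\mathbb{T}$-eigenvector field), $R$, $(e_k)$, $\sigma_k$ be as in the context. For every positive integer $n$ the series $\sum_{k\ge1}\sigma_k^2\|T^ne_k\|^2$ converges and $$\sum_{k=1}^{\infty}\sigma_k^2\|T^ne_k\|^2\le\frac{\|E\|_2^2}{2}.$$
   Context: $\mathcal{H}$ complex separable infinite-dimensional Hilbert space (inner product linear in second variable), $T$ bounded, $\mathbb{T}$ unit circle, $\mu$ normalized Lebesgue measure. $E:\mathbb{T}\to\mathcal{H}$ bounded with $TE(\lambda)=\lambda E(\lambda)$, $\mu$-spanning ($\{E(\lambda):\lambda\in A\}$ spans a dense subspace whenever $\mu(A)=1$); $\|E\|_2^2=\int\|E(\lambda)\|^2d\mu$. $R$ is the positive trace-class operator with $\langle Rx,y\rangle=\int\langle x,E(\lambda)\rangle\overline{\langle y,E(\lambda)\rangle}d\mu(\lambda)$; $(e_k)_{k\ge1}$ is an orthonormal basis of eigenvectors of $R$, $Re_k=2\sigma_k^2e_k$. *)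

(* There is no Hilbert-space library, so a complex separable
   infinite-dimensional Hilbert space is axiomatised below as a left module
   over R[i] with an inner product (linear in the SECOND variable). *)
From HB Require Import structures.
From mathcomp Require Import all_boot all_order all_algebra.
From mathcomp Require Import all_classical all_reals all_analysis.
From mathcomp Require Import complex.
Set Implicit Arguments. Unset Strict Implicit. Unset Printing Implicit Defensive.
Import Order.TTheory GRing.Theory Num.Theory.
Import numFieldNormedType.Exports.
Local Open Scope ring_scope.
Local Open Scope classical_set_scope.

Section HilbertDefs.
Variable R : realType.
Local Notation C := R[i].

Definition cconj (z : C) : C := Complex (complex.Re z) (- complex.Im z).

Variable H : lmodType C.
Variable ip : H -> H -> C.

Definition hnorm (x : H) : R := Num.sqrt (complex.Re (ip x x)).

Definition in_closed_span (S : set H) (x : H) : Prop :=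
  forall eps : R, 0 < eps -> exists (n : nat) (a : 'I_n -> C) (v : 'I_n -> H),
    (forall j, S (v j)) /\ hnorm (x - \sum_(j < n) a j *: v j) < eps.

Definition dense_span (S : set H) : Prop := forall x, in_closed_span S x.

Record is_hilbert : Prop := {
  ip_linr : forall (x y z : H) (a : C), ip x (a *: y + z) = a * ip x y + ip x z;
  ip_herm : forall x y : H, ip y x = cconj (ip x y);
  ip_pos : forall x : H, complex.Im (ip x x) = 0 /\ 0 <= complex.Re (ip x x);
  ip_def : forall x : H, ip x x = 0 -> x = 0;
  h_complete : forall u : nat -> H,
    (forall eps : R, 0 < eps -> exists N : nat, forall m n : nat,
        (N <= m)%N -> (N <= n)%N -> hnorm (u m - u n) < eps) ->
    exists l : H, forall eps : R, 0 < eps -> exists N : nat, forall n : nat,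
        (N <= n)%N -> hnorm (u n - l) < eps;
  h_separable : exists d : nat -> H, forall (x : H) (eps : R), 0 < eps ->
    exists n : nat, hnorm (x - d n) < eps;
  h_infdim : forall n : nat, exists v : 'I_n -> H,
    forall j k : 'I_n, ip (v j) (v k) = (j == k)%:R
}.

Definition bounded_op (T : H -> H) : Prop :=
  exists M : R, forall x : H, hnorm (T x) <= M * hnorm x.

Definition orthonormal_basis (e : nat -> H) : Prop :=
  (forall j k : nat, ip (e j) (e k) = (j == k)%:R) /\ dense_span (range e).

End HilbertDefs.

(* The unit circle T is parametrised by t in [0,1) via t |-> exp(2 pi i t);
   the normalised Lebesgue measure mu on T is the image of Lebesgue measure
   on [0,1) under this map. *)
Definition circ (R : realType) (t : R) : R[i] :=
  Complex (cos (2 * pi * t)) (sin (2 * pi * t)).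

Definition I01 (R : realType) : set R := `[0%R, 1%R[%classic.
Arguments I01 R : clear implicits.

From HB Require Import structures.
From mathcomp Require Import all_boot all_order all_algebra.
From mathcomp Require Import all_classical all_reals all_analysis.
From mathcomp Require Import complex ring lra.
Import Order.TTheory GRing.Theory Num.Theory.
Import numFieldNormedType.Exports.
Local Open Scope ring_scope.
Local Open Scope classical_set_scope.
Set Implicit Arguments. Unset Strict Implicit. Unset Printing Implicit Defensive.

(* Write S = T^n and c_k = 2 sigma_k^2 for the eigenvalues of R.  By
   Parseval, sum_k c_k ||S e_k||^2 = sum_j sum_k c_k |<S* e_j, e_k>|^2, and
   the inner sum is at most <R S* e_j, S* e_j> = int |<e_j, S E(t)>|^2 dmu.
   Since S E(t) = lambda(t)^n E(t) with |lambda(t)| = 1, this integral is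
   int |<e_j, E(t)>|^2 dmu = c_j.  Finally sum_j c_j is the integral of
   sum_j |<e_j, E(t)>|^2 <= ||E(t)||^2, i.e. at most ||E||_2^2.  The adjoint
   S* is not available abstractly and is built as the limit of its partial
   expansions in the basis (e_k). *)

(* unqualified [Re] and [Im] would be the real and imaginary parts of [Num] *)
Local Notation Re := complex.Re.
Local Notation Im := complex.Im.

Lemma ler_add_mul_gt0P (R : realFieldType) (x y c : R) : 0 <= c ->
  (forall eps, 0 < eps -> x <= y + eps * c) -> x <= y.
Proof.
move=> c_ge0 h; apply/ler_addgt0Pr => eps eps_gt0.
have c1_gt0 : 0 < c + 1 by lra.
apply: (le_trans (h _ (divr_gt0 eps_gt0 c1_gt0))); rewrite lerD2l.
by rewrite mulrAC ler_pdivrMr // ler_pM2l //; lra.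
Qed.

Lemma bounded_near_sup (R : realType) (u : nat -> R) (b : R) :
  (forall n, u n <= b) -> forall eps, 0 < eps -> exists N, forall K, u K < u N + eps.
Proof.
move=> u_le eps eps_gt0.
have u_sup : has_sup (range u).
  by split; [exists (u 0%N), 0%N | exists b => _ [n _ <-]].
have [_ [N _ <-] supN] := sup_adherent eps_gt0 u_sup.
exists N => K.
have : u K <= sup (range u) by apply: (sup_upper_bound u_sup); exists K.
lra.
Qed.

Lemma measurable_I01 (R : realType) : measurable (I01 R).
Proof. exact: measurable_itv. Qed.

Lemma lebesgue_measure_I01_lt_oo (R : realType) : (lebesgue_measure (I01 R) < +oo)%E.
Proof. by rewrite /I01 lebesgue_measure_itv /= lte01 /= ltry. Qed.

Lemma bounded_integrable_I01 (R : realType) (f : R -> R) (b : R) :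
  measurable_fun (I01 R) f -> (forall t, I01 R t -> 0 <= f t <= b) ->
  lebesgue_measure.-integrable (I01 R) (EFin \o f).
Proof.
move=> f_meas f_bd; apply: measurable_bounded_integrable => //.
- exact: measurable_I01.
- exact: lebesgue_measure_I01_lt_oo.
exists b; split; first exact: num_real.
move=> M M_gt t t01; have /andP[f_ge0 f_le] := f_bd t t01.
by rewrite /= ger0_norm // (le_trans f_le (ltW M_gt)).
Qed.

Section ComplexNorm.
Variable R : realType.
Implicit Types a b z : R[i].

Definition cnorm2 z : R := Re z ^+ 2 + Im z ^+ 2.

Lemma cconjE z : cconj z = z^*%C.
Proof. by case: z. Qed.

Lemma cReD a b : Re (a + b) = Re a + Re b.
Proof. by case: a; case: b. Qed.

Lemma cReN a : Re (- a) = - Re a.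
Proof. by case: a. Qed.

Lemma cReM a b : Re (a * b) = Re a * Re b - Im a * Im b.
Proof. by case: a; case: b. Qed.

Lemma cImM a b : Im (a * b) = Re a * Im b + Im a * Re b.
Proof. by case: a; case: b. Qed.

Lemma cRe_conj a : Re a^*%C = Re a.
Proof. by case: a. Qed.

Lemma cIm_conj a : Im a^*%C = - Im a.
Proof. by case: a. Qed.

Lemma cRe_sum (I : Type) (r : seq I) (P : pred I) (F : I -> R[i]) :
  Re (\sum_(i <- r | P i) F i) = \sum_(i <- r | P i) Re (F i).
Proof. exact: (big_morph _ cReD). Qed.

Lemma complex_eq0 z : Re z = 0 -> Im z = 0 -> z = 0.
Proof. by case: z => ? ? /= -> ->. Qed.

Lemma cnorm2_ge0 z : 0 <= cnorm2 z.
Proof. by rewrite addr_ge0 ?sqr_ge0. Qed.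

Lemma cnorm2M a b : cnorm2 (a * b) = cnorm2 a * cnorm2 b.
Proof. rewrite /cnorm2 cReM cImM; ring. Qed.

Lemma cnorm2X z m : cnorm2 (z ^+ m) = cnorm2 z ^+ m.
Proof.
elim: m => [|m IH]; first by rewrite /cnorm2 /= expr1n expr0n addr0.
by rewrite !exprS cnorm2M IH.
Qed.

Lemma cnorm2_conj z : cnorm2 z^*%C = cnorm2 z.
Proof. by rewrite /cnorm2 cRe_conj cIm_conj sqrrN. Qed.

Lemma cRe_mul_conj z : Re (z * z^*%C) = cnorm2 z.
Proof. rewrite cReM cRe_conj cIm_conj /cnorm2; ring. Qed.

Lemma cnorm2_circ (t : R) : cnorm2 (circ t) = 1.
Proof. exact: cos2Dsin2. Qed.

End ComplexNorm.

Section InnerProduct.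
Variables (R : realType) (H : lmodType R[i]) (ip : H -> H -> R[i]).
Hypothesis hH : is_hilbert ip.
Implicit Types x y z : H.

Lemma iprD x y z : ip x (y + z) = ip x y + ip x z.
Proof. by have := ip_linr hH x y z 1; rewrite scale1r mul1r. Qed.

Lemma ipr0 x : ip x 0 = 0.
Proof. by have := iprD x 0 0; rewrite addr0 -{1}[ip x 0]addr0 => /addrI/esym. Qed.

Lemma iprZ x a y : ip x (a *: y) = a * ip x y.
Proof. by have := ip_linr hH x y 0 a; rewrite !addr0 ipr0 addr0. Qed.

Lemma iprN x y : ip x (- y) = - ip x y.
Proof. by rewrite -scaleN1r iprZ mulN1r. Qed.

Lemma iprB x y z : ip x (y - z) = ip x y - ip x z.
Proof. by rewrite iprD iprN. Qed.

Lemma ipr_sum x (I : Type) (r : seq I) (P : pred I) (F : I -> H) :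
  ip x (\sum_(i <- r | P i) F i) = \sum_(i <- r | P i) ip x (F i).
Proof. exact: (big_morph _ (iprD x) (ipr0 x)). Qed.

Lemma ip_conj x y : ip y x = (ip x y)^*%C.
Proof. by rewrite (ip_herm hH) cconjE. Qed.

Lemma iplD x y z : ip (x + y) z = ip x z + ip y z.
Proof. by rewrite ip_conj iprD rmorphD /= -!ip_conj. Qed.

Lemma iplZ a x y : ip (a *: x) y = a^*%C * ip x y.
Proof. by rewrite ip_conj iprZ rmorphM /= -ip_conj. Qed.

Lemma ipl0 y : ip 0 y = 0.
Proof. by rewrite ip_conj ipr0 rmorph0. Qed.

Lemma iplN x y : ip (- x) y = - ip x y.
Proof. by rewrite ip_conj iprN rmorphN /= -ip_conj. Qed.

Lemma iplB x y z : ip (x - y) z = ip x z - ip y z.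
Proof. by rewrite iplD iplN. Qed.

Lemma ipl_sum y (I : Type) (r : seq I) (P : pred I) (F : I -> H) :
  ip (\sum_(i <- r | P i) F i) y = \sum_(i <- r | P i) ip (F i) y.
Proof. exact: (big_morph (fun x => ip x y) (fun a b => iplD a b y) (ipl0 y)). Qed.

Lemma cRe_ip_sym x y : Re (ip y x) = Re (ip x y).
Proof. by rewrite ip_conj cRe_conj. Qed.

Definition hnorm2 x : R := Re (ip x x).

Lemma hnorm2_ge0 x : 0 <= hnorm2 x.
Proof. exact: (ip_pos hH x).2. Qed.

Lemma hnorm_ge0 x : 0 <= hnorm ip x.
Proof. exact: sqrtr_ge0. Qed.

Lemma sqr_hnorm x : hnorm ip x ^+ 2 = hnorm2 x.
Proof. by rewrite sqr_sqrtr // hnorm2_ge0. Qed.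

Lemma hnorm2D x y : hnorm2 (x + y) = hnorm2 x + hnorm2 y + 2 * Re (ip x y).
Proof. rewrite /hnorm2 iplD !iprD !cReD (cRe_ip_sym y x); ring. Qed.

Lemma hnorm2N x : hnorm2 (- x) = hnorm2 x.
Proof. by rewrite /hnorm2 iplN iprN opprK. Qed.

Lemma hnorm2B x y : hnorm2 (x - y) = hnorm2 x + hnorm2 y - 2 * Re (ip x y).
Proof. rewrite hnorm2D hnorm2N iprN cReN; ring. Qed.

Lemma hnorm2Z a x : hnorm2 (a *: x) = cnorm2 a * hnorm2 x.
Proof.
rewrite /hnorm2 iplZ iprZ mulrA cReM (ip_pos hH x).1 mulr0 subr0.
by rewrite [_ * a]mulrC cRe_mul_conj.
Qed.

Lemma hnorm2_eq0 x : hnorm2 x = 0 -> x = 0.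
Proof. by move=> x0; apply/(ip_def hH)/complex_eq0 => //; exact: (ip_pos hH x).1. Qed.

Lemma hnormN x : hnorm ip (- x) = hnorm ip x.
Proof. by rewrite /hnorm iplN iprN opprK. Qed.

Lemma hnorm_distC x y : hnorm ip (x - y) = hnorm ip (y - x).
Proof. by rewrite -hnormN opprB. Qed.

Lemma hnorm_lt_sqr x eps : 0 < eps -> hnorm2 x < eps ^+ 2 -> hnorm ip x < eps.
Proof. by move=> eps_gt0; rewrite -sqr_hnorm ltr_pXn2r // nnegrE ?hnorm_ge0 ?ltW. Qed.

Lemma cRe_ip_le x y : Re (ip x y) <= hnorm ip x * hnorm ip y.
Proof.
have [y0|y_neq0] := eqVneq (hnorm2 y) 0.
  by rewrite (hnorm2_eq0 y0) ipr0 mulr_ge0 ?hnorm_ge0.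
set r := Re (ip x y).
have y_gt0 : 0 < hnorm2 y by rewrite lt_def y_neq0 hnorm2_ge0.
have r2_le : r ^+ 2 <= hnorm2 x * hnorm2 y.
  pose t := r / hnorm2 y.
  have ty : t * hnorm2 y = r by rewrite mulrVK ?unitfE.
  (* minimise ||x - t y||^2 over real t *)
  have := hnorm2_ge0 (x - Complex t 0 *: y).
  rewrite hnorm2B hnorm2Z iprZ cReM /= mul0r subr0 -/r /cnorm2 /= expr0n addr0.
  have -> : t ^+ 2 * hnorm2 y = t * r by rewrite expr2 -mulrA ty.
  have -> : r ^+ 2 = t * r * hnorm2 y by rewrite -ty expr2; ring.
  nra.
rewrite -!sqr_hnorm -exprMn in r2_le.
have := mulr_ge0 (hnorm_ge0 x) (hnorm_ge0 y); nra.
Qed.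

Lemma normr_cRe_ip_le x y : `|Re (ip x y)| <= hnorm ip x * hnorm ip y.
Proof.
by rewrite ler_norml cRe_ip_le andbT lerNl -cReN -iplN -hnormN cRe_ip_le.
Qed.

End InnerProduct.

Section Iterates.
Variables (R : realType) (H : lmodType R[i]) (T : {linear H -> H}).

Lemma iter_is_linear n : linear (iter n T).
Proof. by elim: n => [|n IH] a u v //=; rewrite IH linearP. Qed.

HB.instance Definition _ n :=
  GRing.isLinear.Build R[i] H H *:%R (iter n T) (iter_is_linear n).

Lemma iter_eigen v c : T v = c *: v -> forall m, iter m T v = c ^+ m *: v.
Proof.
move=> Tv; elim=> [|m IH] /=; first by rewrite scale1r.
by rewrite IH linearZ /= Tv scalerA exprSr.
Qed.

Lemma hnorm_iter_le (ip : H -> H -> R[i]) (M : R) :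
  (forall x, hnorm ip (T x) <= M * hnorm ip x) ->
  forall m x, hnorm ip (iter m T x) <= `|M| ^+ m * hnorm ip x.
Proof.
move=> T_le; elim=> [|m IH] x /=; first by rewrite mul1r.
apply: (le_trans (T_le _)); rewrite exprS -mulrA.
apply: (le_trans (ler_wpM2r (hnorm_ge0 _ _) (ler_norm M))).
by rewrite ler_wpM2l ?IH.
Qed.

End Iterates.

Section OrthonormalBasis.
Variables (R : realType) (H : lmodType R[i]) (ip : H -> H -> R[i]).
Hypothesis hH : is_hilbert ip.
Variable e : nat -> H.
Hypothesis he : orthonormal_basis ip e.
Local Notation hnorm2 := (hnorm2 ip).

Lemma ip_e_sum j K (b : nat -> R[i]) :
  ip (e j) (\sum_(k < K) b k *: e k) = if (j < K)%N then b j else 0.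
Proof.
rewrite (ipr_sum hH); under eq_bigr do rewrite (iprZ hH) he.1.
elim: K => [|K IH]; first by rewrite big_ord0.
rewrite big_ord_recr /= IH ltnS; case: ltngtP => [||->] /=.
- by rewrite mulr0 addr0.
- by rewrite mulr0 addr0.
- by rewrite mulr1 add0r.
Qed.

Definition proj K x := \sum_(k < K) ip (e k) x *: e k.

Lemma proj_is_linear K : linear (proj K).
Proof.
move=> a x y; rewrite /proj scaler_sumr -big_split; apply: eq_bigr => k _.
by rewrite (iprD hH) (iprZ hH) scalerDl scalerA.
Qed.

HB.instance Definition _ K :=
  GRing.isLinear.Build R[i] H H *:%R (proj K) (proj_is_linear K).

Lemma ip_e_proj j K x : ip (e j) (proj K x) = if (j < K)%N then ip (e j) x else 0.
Proof. exact: (ip_e_sum j K (fun k => ip (e k) x)). Qed.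

Lemma ipl_proj K x y : ip (proj K x) y = \sum_(k < K) (ip (e k) x)^*%C * ip (e k) y.
Proof. by rewrite (ipl_sum hH); under eq_bigr do rewrite (iplZ hH). Qed.

Lemma proj_e i K : (i < K)%N -> proj K (e i) = e i.
Proof.
move=> iK; rewrite /proj (bigD1 (Ordinal iK)) //= he.1 eqxx scale1r big1 ?addr0 //.
move=> k ki; rewrite he.1.
suff /negbTE -> : (k : nat) != i by rewrite scale0r.
by apply: contra ki => /eqP ki; apply/eqP/val_inj.
Qed.

Lemma hnorm2_proj K x : hnorm2 (proj K x) = \sum_(k < K) cnorm2 (ip (e k) x).
Proof.
rewrite /hnorm2 ipl_proj cRe_sum; apply: eq_bigr => k _.
by rewrite ip_e_proj ltn_ord mulrC cRe_mul_conj.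
Qed.

Lemma hnorm2_sub_proj K x :
  hnorm2 (x - proj K x) = hnorm2 x - \sum_(k < K) cnorm2 (ip (e k) x).
Proof.
have Re_x_proj : Re (ip x (proj K x)) = \sum_(k < K) cnorm2 (ip (e k) x).
  rewrite -(cRe_ip_sym hH) ipl_proj cRe_sum; apply: eq_bigr => k _.
  by rewrite mulrC cRe_mul_conj.
rewrite (hnorm2B hH) hnorm2_proj Re_x_proj; ring.
Qed.

Lemma bessel K x : \sum_(k < K) cnorm2 (ip (e k) x) <= hnorm2 x.
Proof. by have := hnorm2_ge0 hH (x - proj K x); rewrite hnorm2_sub_proj subr_ge0. Qed.

Lemma cnorm2_coef_le j x : cnorm2 (ip (e j) x) <= hnorm2 x.
Proof.
apply: le_trans (bessel j.+1 x); rewrite big_ord_recr /= lerDr.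
by apply: sumr_ge0 => k _; exact: cnorm2_ge0.
Qed.

Lemma proj_approx x eps : 0 < eps ->
  exists K, forall L, (K <= L)%N -> hnorm2 (x - proj L x) < eps.
Proof.
move=> eps_gt0.
have sqrt_gt0 : 0 < Num.sqrt eps by rewrite sqrtr_gt0.
have [n [a [v [v_e x_v]]]] := he.2 x _ sqrt_gt0.
have [idx e_idx] : exists idx : 'I_n -> nat, forall j, e (idx j) = v j.
  apply: (@fin_all_exists _ (fun=> nat) (fun j i => e i = v j)) => j.
  by have [i _ <-] := v_e j; exists i.
exists (\max_(j < n) idx j).+1 => L L_ge.
set y := \sum_(j < n) a j *: v j.
have proj_y : proj L y = y.
  rewrite linear_sum; apply: eq_bigr => j _; rewrite linearZ /= -e_idx proj_e //.
  by apply: leq_trans L_ge; rewrite ltnS (leq_bigmax j).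
(* the best approximation in span(e_0..e_{L-1}) beats y *)
have -> : x - proj L x = (x - y) - proj L (x - y) by rewrite linearB /= proj_y opprB addrA subrK.
apply: (le_lt_trans (y := hnorm2 (x - y))).
  by rewrite hnorm2_sub_proj gerBl sumr_ge0 // => k _; exact: cnorm2_ge0.
rewrite -(sqr_hnorm hH) -(sqr_sqrtr (ltW eps_gt0)).
by rewrite ltr_pXn2r // nnegrE ?hnorm_ge0 ?sqrtr_ge0.
Qed.

Lemma sum_weighted_hnorm2_le N (c : 'I_N -> R) (x : 'I_N -> H) (b : R) :
  (forall k, 0 <= c k) ->
  (forall L, \sum_(j < L) \sum_(k < N) c k * cnorm2 (ip (e j) (x k)) <= b) ->
  \sum_(k < N) c k * hnorm2 (x k) <= b.
Proof.
move=> c_ge0 b_ge; apply: (@ler_add_mul_gt0P _ _ _ (\sum_(k < N) c k)).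
  by apply: sumr_ge0 => k _.
move=> eps eps_gt0.
have [K K_approx] : exists K : 'I_N -> nat,
    forall k L, (K k <= L)%N -> hnorm2 (x k - proj L (x k)) < eps.
  apply: (@fin_all_exists _ (fun=> nat)
    (fun k K => forall L, (K <= L)%N -> hnorm2 (x k - proj L (x k)) < eps)) => k.
  exact: proj_approx.
pose L := \max_(k < N) K k.
have x_le k : hnorm2 (x k) <= \sum_(j < L) cnorm2 (ip (e j) (x k)) + eps.
  by have := K_approx k L (leq_bigmax k); rewrite hnorm2_sub_proj; lra.
apply: (le_trans (y := \sum_(k < N) c k * (\sum_(j < L) cnorm2 (ip (e j) (x k)) + eps))).
  by apply: ler_sum => k _; rewrite ler_wpM2l.
under eq_bigr do rewrite mulrDr mulr_sumr [_ * eps]mulrC.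
by rewrite big_split /= -mulr_sumr lerD2r exchange_big /= b_ge.
Qed.

Section Adjoint.
Variables (S : {linear H -> H}) (B : R).
Hypotheses (B_ge0 : 0 <= B) (S_le : forall x, hnorm ip (S x) <= B * hnorm ip x).

Definition adj_partial y K := \sum_(k < K) (ip y (S (e k)))^*%C *: e k.

Lemma ipl_adj_partial y K x : ip (adj_partial y K) x = ip y (S (proj K x)).
Proof.
rewrite (ipl_sum hH) linear_sum (ipr_sum hH); apply: eq_bigr => k _.
by rewrite (iplZ hH) linearZ (iprZ hH) conjcK mulrC.
Qed.

Lemma proj_adj_partial y L K : (L <= K)%N -> proj L (adj_partial y K) = adj_partial y L.
Proof.
move=> LK; apply: eq_bigr => k _.
by rewrite (ip_e_sum _ _ (fun k => (ip y (S (e k)))^*%C)) (leq_trans (ltn_ord k) LK).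
Qed.

Lemma hnorm2_adj_partialB y L K : (L <= K)%N ->
  hnorm2 (adj_partial y K - adj_partial y L) =
  hnorm2 (adj_partial y K) - hnorm2 (adj_partial y L).
Proof. by move=> LK; rewrite -(proj_adj_partial y LK) hnorm2_sub_proj hnorm2_proj. Qed.

Lemma hnorm2_adj_partial_le y K : hnorm2 (adj_partial y K) <= (hnorm ip y * B) ^+ 2.
Proof.
set w := adj_partial y K.
have w_le : hnorm ip w ^+ 2 <= hnorm ip y * B * hnorm ip w.
  rewrite (sqr_hnorm hH) /hnorm2 ipl_adj_partial proj_adj_partial // -mulrA.
  by apply: (le_trans (cRe_ip_le hH _ _)); rewrite ler_wpM2l ?hnorm_ge0.
have := hnorm_ge0 ip w; have := mulr_ge0 (hnorm_ge0 ip y) B_ge0.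
rewrite -(sqr_hnorm hH); nra.
Qed.

Lemma adj_partial_cvg y : exists v, forall eps, 0 < eps ->
  exists N, forall K, (N <= K)%N -> hnorm ip (adj_partial y K - v) < eps.
Proof.
pose s K := hnorm2 (adj_partial y K).
have s_homo : {homo s : L K / (L <= K)%N >-> L <= K}.
  by move=> L K LK; rewrite -subr_ge0 -hnorm2_adj_partialB // (hnorm2_ge0 hH).
apply: (h_complete hH) => eps eps_gt0.
have [N s_tail] := bounded_near_sup (hnorm2_adj_partial_le y) (exprn_gt0 2 eps_gt0).
exists N => L K NL NK.
wlog KL : L K NL NK / (K <= L)%N.
  move=> W; case: (leqP K L) => [|/ltnW LK]; first exact: W.
  by rewrite (hnorm_distC hH); apply: W.
apply: (hnorm_lt_sqr hH) => //; rewrite hnorm2_adj_partialB //.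
have := s_tail L; have := s_homo _ _ NK; rewrite /s; lra.
Qed.

Lemma adjoint_exists y : exists v, forall x, ip v x = ip y (S x).
Proof.
have [v v_lim] := adj_partial_cvg y.
exists v; pose d x := ip v x - ip y (S x).
have Re_d x : Re (d x) = 0.
  apply/eqP; rewrite -normr_le0.
  apply: (@ler_add_mul_gt0P _ _ _ (hnorm ip x + hnorm ip y * B)).
    by rewrite addr_ge0 ?mulr_ge0 ?hnorm_ge0.
  move=> eps eps_gt0; rewrite add0r.
  have [K1 K1_lim] := v_lim eps eps_gt0.
  have [K2 K2_approx] := proj_approx x (exprn_gt0 2 eps_gt0).
  pose K := maxn K1 K2.
  have -> : d x = ip (v - adj_partial y K) x + ip y (S (proj K x - x)).
    by rewrite /d (iplB hH) linearB (iprB hH) ipl_adj_partial; ring.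
  have v_near : hnorm ip (v - adj_partial y K) <= eps.
    by rewrite (hnorm_distC hH); apply/ltW/K1_lim; rewrite leq_maxl.
  have x_near : hnorm ip (proj K x - x) <= eps.
    rewrite (hnorm_distC hH); apply/ltW/(hnorm_lt_sqr hH eps_gt0)/K2_approx.
    by rewrite leq_maxr.
  rewrite cReD (le_trans (ler_normD _ _)) // mulrDr lerD //.
    apply: (le_trans (normr_cRe_ip_le hH _ _)).
    by rewrite ler_wpM2r ?hnorm_ge0.
  apply: (le_trans (normr_cRe_ip_le hH _ _)).
  rewrite mulrCA ler_wpM2l ?hnorm_ge0 //.
  by apply: (le_trans (S_le _)); rewrite [eps * B]mulrC ler_wpM2l.
have Im_d x : Im (d x) = 0.
  have := Re_d ('i%C *: x); rewrite /d linearZ !(iprZ hH) -mulrBr cReM /=; lra.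
move=> x; apply/eqP; rewrite -subr_eq0; apply/eqP.
exact: complex_eq0 (Re_d x) (Im_d x).
Qed.

End Adjoint.

Section Spectral.
Variables (E : R -> H) (Rop : {linear H -> H}) (sigma : nat -> R).
Hypothesis R_def : forall x y : H,
  Re (ip (Rop x) y) =
    Rintegral lebesgue_measure (I01 R) (fun t => Re (ip x (E t) * cconj (ip y (E t)))).
Hypothesis Rop_e : forall k, Rop (e k) = Complex (2 * sigma k ^+ 2) 0 *: e k.

Definition eigR k : R := 2 * sigma k ^+ 2.

Lemma eigR_ge0 k : 0 <= eigR k.
Proof. by rewrite mulr_ge0 ?sqr_ge0. Qed.

Definition Rform x := Re (ip (Rop x) x).

Lemma Rform_integral x :
  Rform x = Rintegral lebesgue_measure (I01 R) (fun t => cnorm2 (ip x (E t))).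
Proof. by rewrite /Rform R_def; apply: eq_Rintegral => t _; rewrite cconjE cRe_mul_conj. Qed.

Lemma Rform_ge0 x : 0 <= Rform x.
Proof. by rewrite Rform_integral; apply: Rintegral_ge0 => t _; exact: cnorm2_ge0. Qed.

Lemma Rform_e j : Rform (e j) = eigR j.
Proof. by rewrite /Rform Rop_e (iplZ hH) he.1 eqxx mulr1. Qed.

Lemma cRe_ip_Rop_sym x y : Re (ip (Rop x) y) = Re (ip (Rop y) x).
Proof.
rewrite !R_def; apply: eq_Rintegral => t _.
rewrite !cconjE !cReM !cRe_conj !cIm_conj; ring.
Qed.

Lemma ipl_Rop_proj K x y :
  ip (Rop (proj K x)) y = \sum_(k < K) Complex (eigR k) 0 * (ip (e k) x)^*%C * ip (e k) y.
Proof.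
rewrite linear_sum (ipl_sum hH); apply: eq_bigr => k _.
by rewrite linearZ /= Rop_e !(iplZ hH) mulrCA mulrA /= oppr0.
Qed.

(* Rop is diagonal in (e_k), so for x = proj K x + r the cross terms of
   Rform x vanish, and Rform r >= 0. *)
Lemma sum_eigR_le_Rform K x : \sum_(k < K) eigR k * cnorm2 (ip x (e k)) <= Rform x.
Proof.
set p := proj K x; set r := x - p.
have xE : x = p + r by rewrite addrC subrK.
have p_r : ip (Rop p) r = 0.
  rewrite ipl_Rop_proj big1 // => k _.
  by rewrite (iprB hH) ip_e_proj ltn_ord subrr mulr0.
have Rform_p : Rform p = \sum_(k < K) eigR k * cnorm2 (ip x (e k)).
  rewrite /Rform ipl_Rop_proj cRe_sum; apply: eq_bigr => k _.
  rewrite ip_e_proj ltn_ord -mulrA cReM /= mul0r subr0.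
  by rewrite [_^*%C * _]mulrC cRe_mul_conj -cnorm2_conj -(ip_conj hH).
have -> : Rform x = Rform p + Re (ip (Rop p) r) + Re (ip (Rop r) p) + Rform r.
  rewrite /Rform {1 2}xE linearD /= (iplD hH) !(iprD hH) !cReD; ring.
by rewrite -Rform_p (cRe_ip_Rop_sym r p) p_r /= !addr0 lerDl Rform_ge0.
Qed.

Section TraceBound.
Hypothesis E_meas : forall x : H,
  measurable_fun (I01 R) (fun t => Re (ip x (E t))) /\
  measurable_fun (I01 R) (fun t => Im (ip x (E t))).
Variable Mb : R.
Hypothesis E_le : forall t, I01 R t -> hnorm ip (E t) <= Mb.

Lemma coef_measurable j : measurable_fun (I01 R) (fun t => cnorm2 (ip (e j) (E t))).
Proof.
have [mRe mIm] := E_meas (e j).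
by apply: measurable_realfun.measurable_funD; exact: measurable_realfun.measurable_funX.
Qed.

Definition bessel_sum K t := \sum_(j < K) cnorm2 (ip (e j) (E t)).

Lemma bessel_sum_measurable K : measurable_fun (I01 R) (bessel_sum K).
Proof. by apply: measurable_sum => j; exact: coef_measurable. Qed.

Lemma hnorm2_E_measurable : measurable_fun (I01 R) (fun t => hnorm2 (E t)).
Proof.
apply: (measurable_realfun.measurable_fun_cvg (h := bessel_sum)) => [|t _].
  exact: bessel_sum_measurable.
apply/cvgrPdist_lt => eps eps_gt0.
have [K K_approx] := proj_approx (E t) eps_gt0.
exists K => // L /= KL; have := K_approx L KL.
by rewrite hnorm2_sub_proj ger0_norm // subr_ge0 bessel.
Qed.

Lemma hnorm2_E_le t : I01 R t -> hnorm2 (E t) <= Mb ^+ 2.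
Proof.
move=> t01; rewrite -(sqr_hnorm hH).
by have := hnorm_ge0 ip (E t); have := E_le t01; nra.
Qed.

Lemma coef_integrable j :
  lebesgue_measure.-integrable (I01 R) (EFin \o (fun t => cnorm2 (ip (e j) (E t)))).
Proof.
apply: (@bounded_integrable_I01 _ _ (Mb ^+ 2)) => [|t t01]; first exact: coef_measurable.
by rewrite cnorm2_ge0 (le_trans (cnorm2_coef_le _ _)) ?hnorm2_E_le.
Qed.

Lemma bessel_sum_integrable K : lebesgue_measure.-integrable (I01 R) (EFin \o bessel_sum K).
Proof.
apply: (@bounded_integrable_I01 _ _ (Mb ^+ 2)) => [|t t01]; first exact: bessel_sum_measurable.
rewrite (le_trans (bessel _ _)) ?hnorm2_E_le ?andbT //.
by apply: sumr_ge0 => j _; exact: cnorm2_ge0.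
Qed.

Lemma hnorm2_E_integrable : lebesgue_measure.-integrable (I01 R) (EFin \o (fun t => hnorm2 (E t))).
Proof.
apply: (@bounded_integrable_I01 _ _ (Mb ^+ 2)) => [|t t01]; first exact: hnorm2_E_measurable.
by rewrite (hnorm2_ge0 hH) hnorm2_E_le.
Qed.

Lemma sum_Rintegral_coef K :
  \sum_(j < K) Rintegral lebesgue_measure (I01 R) (fun t => cnorm2 (ip (e j) (E t))) =
  Rintegral lebesgue_measure (I01 R) (bessel_sum K).
Proof.
elim: K => [|K IH].
  rewrite big_ord0 /bessel_sum; under eq_Rintegral do rewrite big_ord0.
  by rewrite Rintegral_cst ?mul0r //; exact: measurable_I01.
rewrite big_ord_recr /= IH -RintegralD //.
- by apply: eq_Rintegral => t _; rewrite /bessel_sum big_ord_recr.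
- exact: measurable_I01.
- exact: bessel_sum_integrable.
- exact: coef_integrable.
Qed.

Lemma sum_eigR_le_integral K :
  \sum_(j < K) eigR j <= Rintegral lebesgue_measure (I01 R) (fun t => hnorm ip (E t) ^+ 2).
Proof.
under eq_bigr do rewrite -Rform_e Rform_integral.
rewrite sum_Rintegral_coef; under [X in _ <= X]eq_Rintegral do rewrite (sqr_hnorm hH).
apply: le_Rintegral => [||| t _]; last exact: bessel.
- exact: measurable_I01.
- exact: bessel_sum_integrable.
- exact: hnorm2_E_integrable.
Qed.

End TraceBound.

Variables (S : {linear H -> H}) (B : R) (lam : R -> R[i]).
Hypotheses (B_ge0 : 0 <= B) (S_le : forall x, hnorm ip (S x) <= B * hnorm ip x).
Hypotheses (lam_unit : forall t, I01 R t -> cnorm2 (lam t) = 1)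
  (S_E : forall t, I01 R t -> S (E t) = lam t *: E t).

(* with v = S* e_j: <R v, v> = int |<e_j, S E(t)>|^2 = int |<e_j, E(t)>|^2 = eigR j *)
Lemma sum_eigR_ip_S_le j N : \sum_(k < N) eigR k * cnorm2 (ip (e j) (S (e k))) <= eigR j.
Proof.
have [v v_adj] := adjoint_exists B_ge0 S_le (e j).
under eq_bigr do rewrite -v_adj.
apply: le_trans (sum_eigR_le_Rform N v) _.
rewrite -Rform_e !Rform_integral le_eqVlt; apply/orP; left; apply/eqP.
apply: eq_Rintegral => t; rewrite inE => t01.
by rewrite v_adj S_E // (iprZ hH) cnorm2M lam_unit // mul1r.
Qed.

End Spectral.

End OrthonormalBasis.

Theorem lemma5p11 (R : realType) (H : lmodType R[i]) (ip : H -> H -> R[i])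
  (hH : is_hilbert ip)
  (T : {linear H -> H}) (hT : bounded_op ip T)
  (E : R -> H)
  (E_meas : forall x : H,
      measurable_fun (I01 R) (fun t => complex.Re (ip x (E t))) /\
      measurable_fun (I01 R) (fun t => complex.Im (ip x (E t))))
  (E_bdd : exists M : R, forall t, I01 R t -> hnorm ip (E t) <= M)
  (E_eig : forall t, I01 R t -> T (E t) = circ t *: E t)
  (E_span : forall A : set R, measurable A -> A `<=` I01 R ->
      (lebesgue_measure A = 1%:E)%E ->
      dense_span ip [set E t | t in A])
  (Rop : {linear H -> H}) (hR : bounded_op ip Rop)
  (R_def : forall x y : H,
      complex.Re (ip (Rop x) y) =
        Rintegral lebesgue_measure (I01 R)
           (fun t => complex.Re (ip x (E t) * cconj (ip y (E t)))) /\
      complex.Im (ip (Rop x) y) =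
        Rintegral lebesgue_measure (I01 R)
           (fun t => complex.Im (ip x (E t) * cconj (ip y (E t)))))
  (e : nat -> H) (he : orthonormal_basis ip e) (sigma : nat -> R)
  (he_eig : forall k, Rop (e k) = (Complex (2 * sigma k ^+ 2) 0) *: e k)
  (n : nat) : (0 < n)%N ->
  let u := fun k : nat => sigma k ^+ 2 * hnorm ip (iter n T (e k)) ^+ 2 in
  cvgn (series u) /\
  limn (series u) <= Rintegral lebesgue_measure (I01 R) (fun t => hnorm ip (E t) ^+ 2) / 2.
Proof.
move=> _ u.
have [M T_le] := hT; have [Mb E_le] := E_bdd.
have R_re x y := (R_def x y).1.
set I := Rintegral lebesgue_measure (I01 R) (fun t => hnorm ip (E t) ^+ 2).
have lam_unit t (_ : I01 R t) : cnorm2 (circ t ^+ n) = 1.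
  by rewrite cnorm2X cnorm2_circ expr1n.
have partial_le N : \sum_(k < N) eigR sigma k * hnorm2 ip (iter n T (e k)) <= I.
  apply: (sum_weighted_hnorm2_le hH he) => [k|L]; first exact: eigR_ge0.
  apply: le_trans (sum_eigR_le_integral hH he R_re he_eig E_meas E_le L).
  apply: ler_sum => j _.
  exact: (sum_eigR_ip_S_le hH he R_re he_eig (exprn_ge0 n (normr_ge0 M))
    (hnorm_iter_le T_le n) lam_unit (fun t t01 => iter_eigen (E_eig t t01) n)).
have series_le N : series u N <= I / 2.
  have -> : series u N = (\sum_(k < N) eigR sigma k * hnorm2 ip (iter n T (e k))) / 2.
    rewrite /series /= big_mkord mulr_suml; apply: eq_bigr => k _.
    by rewrite /u (sqr_hnorm hH) /eigR; field.
  by apply: ler_wpM2r; [rewrite invr_ge0 | exact: partial_le].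
have series_cvg : cvgn (series u).
  apply: nondecreasing_is_cvgn.
    by apply: nondecreasing_series => k _ _; rewrite mulr_ge0 ?sqr_ge0.
  by exists (I / 2) => _ [N _ <-].
by split => //; apply: limr_le => //; exact: nearW.
Qed.
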